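(* Assume product-form weights $w^t_i=u(i)v(m_t)$. Let $x_{1:n}\in\mathcal X^n$ and let $2\le t\le n-1$ be such that $x_t\in\mathcal A_{t-1}$ (an old symbol) and $x_{t+1}\notin\mathcal A_t$ (a new symbol). Let $x'_{1:n}$ be the sequence obtained from $x_{1:n}$ by swapping $x_t$ and $x_{t+1}$. Then $R^{\vec\beta^*}_S(x'_{1:n}) > R^{\vec\beta^*}_S(x_{1:n})$. Consequently, among all orderings of a fixed multiset of symbols, the redundancy $R^{\vec\beta^*}_S$ is maximized by an ordering in which all $m$ distinct symbols appear in the first $m$ positions.
   Context: Let $\mathcal X$ be a finite base alphabet. For $x_{1:n}\in\mathcal X^n$, let $n_i$ be the number of occurrences of $i$, $\mathcal A=\{x_1,\dots,x_n\}$, $m=|\mathcal A|$; for $0\le t\le n$, $\mathcal A_t=\{x_1,\dots,x_t\}$ ($\mathcal A_0=\emptyset$), $m_t=|\mathcal A_t|$, $n^t_i$ the count of $i$ in $x_{1:t}$. Product-form weights: $u:\mathcal X\to(0,\infty)$, $v:\{0,1,\dots\}\to(0,\infty)$ with $w^t_i:=u(i)v(m_t)$ and $\sum_{k\in\mathcal X\setminus\mathcal A_t}w^t_k\le1$. Adaptive model: $\beta^*_t:=m_t/\ln\frac{t+1}{m_t}$ for $t\ge1$, $\beta^*_0\in(0,\infty)$ fixed; $S^{\vec\beta^*}(x_{t+1}=i\mid x_{1:t})=n^t_i/(t+\beta^*_t)$ if $n^t_i>0$ and $\beta^*_t w^t_i/(t+\beta^*_t)$ if $n^t_i=0$; $S^{\vec\beta^*}(x_{1:n})=\prod_{t=0}^{n-1}S^{\vec\beta^*}(x_{t+1}\mid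 x_{1:t})$. Redundancy $R^{\vec\beta^*}_S(x_{1:n}):=\ln\big(n^{-n}\prod_{j\in\mathcal A}n_j^{n_j}\big)-\ln S^{\vec\beta^*}(x_{1:n})$. Natural logarithms. *)

From Stdlib Require Import Reals Lra Lia List Permutation.
Import ListNotations.
Open Scope R_scope.

Section Adaptive.
Context {X : Type} (eq_dec : forall a b : X, {a = b} + {a <> b}).

Definition ndistinct (l : list X) : nat := length (nodup eq_dec l).

Definition cnt (l : list X) (i : X) : nat := count_occ eq_dec l i.

(* beta*_t, where the prefix p = x_{1:t} has length t *)
Definition beta_star (beta0 : R) (p : list X) : R :=
  match length p with
  | O => beta0
  | S _ => INR (ndistinct p) / ln (INR (length p + 1) / INR (ndistinct p))
  end.

(* S^{beta*}(x_{t+1} = i | x_{1:t}), prefix p = x_{1:t}, t = length p,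
   with product-form weight w^t_i = u(i) v(m_t) *)
Definition cond_prob (u : X -> R) (v : nat -> R) (beta0 : R)
  (p : list X) (i : X) : R :=
  let t := INR (length p) in
  let b := beta_star beta0 p in
  if (0 <? cnt p i)%nat
  then INR (cnt p i) / (t + b)
  else b * (u i * v (ndistinct p)) / (t + b).

Definition seq_prob (u : X -> R) (v : nat -> R) (beta0 : R) (x : list X) : R :=
  fold_right Rmult 1
    (map (fun t => match nth_error x t with
                   | Some i => cond_prob u v beta0 (firstn t x) i
                   | None => 1
                   end) (seq 0 (length x))).

Definition ml_prob (x : list X) : R :=
  fold_right Rmult 1 (map (fun j => INR (cnt x j) ^ cnt x j) (nodup eq_dec x))
  / INR (length x) ^ length x.

Definition redundancy (u : X -> R) (v : nat -> R) (beta0 : R) (x : list X) : R :=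
  ln (ml_prob x) - ln (seq_prob u v beta0 x).

Definition new_weight_sum (enum : list X) (u : X -> R) (v : nat -> R)
  (p : list X) : R :=
  fold_right Rplus 0
    (map (fun k => u k * v (ndistinct p))
       (filter (fun k => if in_dec eq_dec k p then false else true) enum)).

End Adaptive.

(* swap the entries at 0-based positions k and k+1 *)
Fixpoint swap_at {X : Type} (k : nat) (l : list X) : list X :=
  match k, l with
  | O, a :: b :: r => b :: a :: r
  | S k', a :: r => a :: swap_at k' r
  | _, _ => l
  end.

From Stdlib Require Import Reals List Permutation Lra Lia.
Import ListNotations.
Open Scope R_scope.

(* Write beta_fun n m = m / ln (n / m), so that after a nonempty
   prefix of length t with m distinct symbols the adaptive parameter is
   beta_fun (t + 1) m.  Let a be an old symbol and b a new one at positions t, t+1.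
   Both orders emit the same multiset, so the maximum-likelihood term and every
   later factor of the sequential probability agree (the predictor depends on a
   prefix only through its multiset); only the two factors at positions t, t+1
   differ.  Comparing them reduces to the real inequality [beta_swap_ineq],
   proved from ln (1 + 1/n) < 1/n and ln ((n+1)/(m+1)) < ln (n/m).  Hence the
   order (old, new) has strictly larger probability, i.e. the order (new, old)
   has strictly larger redundancy: this is part 1.  For part 2 we pick a
   redundancy maximiser among the finitely many rearrangements of x; by part 1
   it contains no adjacent (old, new) pair, and every such sequence lists its
   distinct symbols first. *)

Definition beta_fun (n m : R) : R := m / ln (n / m).

Lemma ln_gt0 (y : R) : 1 < y -> 0 < ln y.
Proof. intro Hy. rewrite <- ln_1. apply ln_increasing; lra. Qed.

Lemma ratio_gt1 (n m : R) : 0 < m -> m < n -> 1 < n / m.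
Proof.
  intros Hm Hmn. apply (Rmult_lt_reg_r m); [exact Hm|].
  unfold Rdiv. rewrite Rmult_assoc, Rinv_l; lra.
Qed.

Lemma ln_ratio_pos (n m : R) : 0 < m -> m < n -> 0 < ln (n / m).
Proof. intros. apply ln_gt0, ratio_gt1; assumption. Qed.

Lemma beta_fun_pos (n m : R) : 0 < m -> m < n -> 0 < beta_fun n m.
Proof. intros. apply Rdiv_lt_0_compat; [assumption|apply ln_ratio_pos; assumption]. Qed.

(* One more symbol without a new one: ln ((n+1)/m) - ln (n/m) = ln (1 + 1/n) < 1/n. *)
Lemma ln_ratio_succ_num (n m : R) : 0 < m -> 0 < n ->
  ln ((n + 1) / m) < ln (n / m) + 1 / n.
Proof.
  intros Hm Hn.
  assert (Hexp : 1 + 1 / n < exp (1 / n)).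
  { apply exp_ineq1. apply Rgt_not_eq, Rdiv_lt_0_compat; lra. }
  rewrite <- (ln_exp (1 / n)) at 1.
  rewrite <- ln_mult by (try apply exp_pos; apply Rdiv_lt_0_compat; lra).
  apply ln_increasing; [apply Rdiv_lt_0_compat; lra|].
  replace ((n + 1) / m) with (n / m * (1 + 1 / n)) by (field; lra).
  apply Rmult_lt_compat_l; [apply Rdiv_lt_0_compat|]; lra.
Qed.

(* One more symbol which is new: the ratio (n+1)/(m+1) is below n/m when m < n. *)
Lemma ln_ratio_succ_both (n m : R) : 0 < m -> m < n ->
  ln ((n + 1) / (m + 1)) < ln (n / m).
Proof.
  intros Hm Hmn. apply ln_increasing; [apply Rdiv_lt_0_compat; lra|].
  apply (Rmult_lt_reg_r (m * (m + 1))); [nra|].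
  replace ((n + 1) / (m + 1) * (m * (m + 1))) with ((n + 1) * m) by (field; lra).
  replace (n / m * (m * (m + 1))) with (n * (m + 1)) by (field; lra).
  nra.
Qed.

(* The key real inequality behind the swap: with n = t + 1, the left side
   compares the parameters met by the order (new, old), the right side those
   met by the order (old, new). *)
Lemma beta_swap_ineq (n m : R) : 0 < m -> m < n ->
  beta_fun n m * (n + beta_fun (n + 1) m)
  < beta_fun (n + 1) m * (n + beta_fun (n + 1) (m + 1)).
Proof.
  intros Hm Hmn. unfold beta_fun.
  pose proof (ln_ratio_pos n m Hm Hmn) as P1.
  pose proof (ln_ratio_pos (n + 1) m Hm ltac:(lra)) as P2.
  pose proof (ln_ratio_pos (n + 1) (m + 1) ltac:(lra) ltac:(lra)) as P3.
  pose proof (ln_ratio_succ_num n m Hm ltac:(lra)) as Hnum.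
  pose proof (ln_ratio_succ_both n m Hm Hmn) as Hboth.
  set (L1 := ln (n / m)) in *. set (L2 := ln ((n + 1) / m)) in *.
  set (L3 := ln ((n + 1) / (m + 1))) in *.
  assert (HnL2 : n * L2 < n * L1 + 1).
  { replace (n * L1 + 1) with (n * (L1 + 1 / n)) by (field; lra).
    apply Rmult_lt_compat_l; lra. }
  assert (Hcleared : L3 * (n * L2 + m) < L1 * (n * L3 + m + 1)) by nra.
  apply (Rmult_lt_reg_r (L1 * L2 * L3 / m)).
  { apply Rdiv_lt_0_compat; [repeat apply Rmult_lt_0_compat|]; lra. }
  replace (m / L1 * (n + m / L2) * (L1 * L2 * L3 / m)) with (L3 * (n * L2 + m))
    by (field; lra).
  replace (m / L2 * (n + (m + 1) / L3) * (L1 * L2 * L3 / m)) with (L1 * (n * L3 + m + 1))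
    by (field; lra).
  exact Hcleared.
Qed.

(* The two-factor comparison: with t symbols seen, m of them distinct, the old
   symbol seen na times and the new symbol of weight w, emitting (new, old) is
   less probable than emitting (old, new). *)
Lemma swap_factor_ineq (t m na w : R) : 0 < m -> m <= t -> 0 < na -> 0 < w ->
  beta_fun (t + 1) m * w / (t + beta_fun (t + 1) m)
    * (na / (t + 1 + beta_fun (t + 1 + 1) (m + 1)))
  < na / (t + beta_fun (t + 1) m)
    * (beta_fun (t + 1 + 1) m * w / (t + 1 + beta_fun (t + 1 + 1) m)).
Proof.
  intros Hm Hmt Hna Hw.
  pose proof (beta_swap_ineq (t + 1) m Hm ltac:(lra)) as Hkey.
  pose proof (beta_fun_pos (t + 1) m Hm ltac:(lra)) as P0.
  pose proof (beta_fun_pos (t + 1 + 1) m Hm ltac:(lra)) as P1.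
  pose proof (beta_fun_pos (t + 1 + 1) (m + 1) ltac:(lra) ltac:(lra)) as P2.
  set (b0 := beta_fun (t + 1) m) in *. set (b1 := beta_fun (t + 1 + 1) m) in *.
  set (b2 := beta_fun (t + 1 + 1) (m + 1)) in *.
  replace (b0 * w / (t + b0) * (na / (t + 1 + b2)))
    with (na * w / (t + b0) * (b0 / (t + 1 + b2))) by (field; lra).
  replace (na / (t + b0) * (b1 * w / (t + 1 + b1)))
    with (na * w / (t + b0) * (b1 / (t + 1 + b1))) by (field; lra).
  apply Rmult_lt_compat_l; [apply Rdiv_lt_0_compat; nra|].
  apply (Rmult_lt_reg_r ((t + 1 + b2) * (t + 1 + b1))); [nra|].
  replace (b0 / (t + 1 + b2) * ((t + 1 + b2) * (t + 1 + b1))) with (b0 * (t + 1 + b1))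
    by (field; lra).
  replace (b1 / (t + 1 + b1) * ((t + 1 + b2) * (t + 1 + b1))) with (b1 * (t + 1 + b2))
    by (field; lra).
  exact Hkey.
Qed.

Lemma exists_argmax {A : Type} (f : A -> R) (L : list A) : L <> [] ->
  exists y, In y L /\ forall z, In z L -> f z <= f y.
Proof.
  induction L as [|c r IH]; intro H; [congruence|].
  destruct r as [|d r'].
  - exists c. split; [left; reflexivity|]. intros z [<-|[]]. lra.
  - destruct IH as (y & Hy & Hm); [discriminate|].
    destruct (Rle_dec (f c) (f y)).
    + exists y. split; [right; exact Hy|]. intros z [<-|Hz]; auto.
    + exists c. split; [left; reflexivity|].
      intros z [<-|Hz]; [lra|]. specialize (Hm z Hz). lra.
Qed.

Section Sequences.
Context {X : Type} (eq_dec : forall a b : X, {a = b} + {a <> b}).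

Lemma ndistinct_same_support (l l' : list X) : (forall x, In x l <-> In x l') ->
  ndistinct eq_dec l = ndistinct eq_dec l'.
Proof.
  intro H. unfold ndistinct. apply Permutation_length.
  apply NoDup_Permutation; try apply NoDup_nodup.
  intro y. rewrite !nodup_In. apply H.
Qed.

Lemma ndistinct_perm (l l' : list X) : Permutation l l' ->
  ndistinct eq_dec l = ndistinct eq_dec l'.
Proof.
  intro H. apply ndistinct_same_support.
  intro y; split; intro; eauto using Permutation_in, Permutation_sym.
Qed.

Lemma ndistinct_le_length (l : list X) : (ndistinct eq_dec l <= length l)%nat.
Proof.
  unfold ndistinct. apply NoDup_incl_length; [apply NoDup_nodup|].
  intros y Hy. apply nodup_In in Hy. exact Hy.
Qed.

Lemma ndistinct_pos (l : list X) : l <> [] -> (1 <= ndistinct eq_dec l)%nat.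
Proof.
  intro Hl. destruct l as [|c r]; [contradiction|].
  unfold ndistinct. assert (Hc : In c (nodup eq_dec (c :: r))) by (apply nodup_In; left; auto).
  destruct (nodup eq_dec (c :: r)); simpl in *; [contradiction|lia].
Qed.

Lemma ndistinct_snoc_old (l : list X) (a : X) : In a l ->
  ndistinct eq_dec (l ++ [a]) = ndistinct eq_dec l.
Proof.
  intro H. apply ndistinct_same_support. intro y. rewrite in_app_iff. simpl.
  split; intuition; subst; auto.
Qed.

Lemma ndistinct_snoc_new (l : list X) (b : X) : ~ In b l ->
  ndistinct eq_dec (l ++ [b]) = S (ndistinct eq_dec l).
Proof.
  intro H. transitivity (ndistinct eq_dec (b :: l)).
  - apply ndistinct_perm, Permutation_sym, Permutation_cons_append.
  - unfold ndistinct. simpl. destruct (in_dec eq_dec b l); [contradiction|reflexivity].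
Qed.

Lemma ndistinct_NoDup (d : list X) : NoDup d -> ndistinct eq_dec d = length d.
Proof. intro Hd. unfold ndistinct. rewrite nodup_fixed_point; auto. Qed.

Lemma fold_Rmult_perm (l l' : list R) : Permutation l l' ->
  fold_right Rmult 1 l = fold_right Rmult 1 l'.
Proof. induction 1; simpl; try rewrite IHPermutation; try ring. congruence. Qed.

Lemma ml_prob_perm (x y : list X) : Permutation x y -> ml_prob eq_dec x = ml_prob eq_dec y.
Proof.
  intro H. unfold ml_prob. rewrite (Permutation_length H). f_equal.
  rewrite (map_ext (fun j => INR (cnt eq_dec x j) ^ cnt eq_dec x j)
                   (fun j => INR (cnt eq_dec y j) ^ cnt eq_dec y j))
    by (intro j; unfold cnt; rewrite (proj1 (Permutation_count_occ eq_dec x y) H j);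
        reflexivity).
  apply fold_Rmult_perm, Permutation_map.
  apply NoDup_Permutation; try apply NoDup_nodup. intro z. rewrite !nodup_In.
  split; intro; eauto using Permutation_in, Permutation_sym.
Qed.

Lemma swap_at_app (l1 : list X) (a b : X) (r : list X) :
  swap_at (length l1) (l1 ++ a :: b :: r) = l1 ++ b :: a :: r.
Proof. induction l1 as [|c l IH]; simpl; [reflexivity|]. rewrite IH. reflexivity. Qed.

Fixpoint insertions (a : X) (l : list X) : list (list X) :=
  match l with
  | [] => [[a]]
  | c :: r => (a :: c :: r) :: map (cons c) (insertions a r)
  end.

Fixpoint permutations (l : list X) : list (list X) :=
  match l with
  | [] => [[]]
  | a :: r => flat_map (insertions a) (permutations r)
  end.

Lemma insertions_complete (a : X) (l1 l2 : list X) : In (l1 ++ a :: l2) (insertions a (l1 ++ l2)).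
Proof.
  induction l1 as [|c l IH]; simpl.
  - destruct l2; simpl; auto.
  - right. apply in_map, IH.
Qed.

Lemma insertions_sound (a : X) (l z : list X) : In z (insertions a l) -> Permutation (a :: l) z.
Proof.
  revert z. induction l as [|c r IH]; simpl; intros z Hz.
  - destruct Hz as [<-|[]]. reflexivity.
  - destruct Hz as [<-|Hz]; [reflexivity|].
    apply in_map_iff in Hz. destruct Hz as (w & <- & Hw).
    rewrite perm_swap. constructor. apply IH, Hw.
Qed.

Lemma permutations_complete (x z : list X) : Permutation x z -> In z (permutations x).
Proof.
  revert z. induction x as [|a r IH]; intros z H; simpl.
  - apply Permutation_nil in H. subst. left. reflexivity.
  - assert (Ha : In a z) by (apply (Permutation_in _ H); left; reflexivity).
    apply in_split in Ha. destruct Ha as (z1 & z2 & ->).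
    apply in_flat_map. exists (z1 ++ z2). split.
    + apply IH. eapply Permutation_cons_app_inv; eassumption.
    + apply insertions_complete.
Qed.

Lemma permutations_sound (x z : list X) : In z (permutations x) -> Permutation x z.
Proof.
  revert z. induction x as [|a r IH]; intros z H; simpl in H.
  - destruct H as [<-|[]]. reflexivity.
  - apply in_flat_map in H. destruct H as (w & Hw & Hz).
    apply insertions_sound in Hz. rewrite <- Hz. constructor. apply IH, Hw.
Qed.

Lemma old_new_pair_or_distinct_prefix (y : list X) :
  (exists l1 a b post, y = l1 ++ a :: b :: post /\ In a l1 /\ ~ In b (l1 ++ [a])) \/
  (exists d r, y = d ++ r /\ NoDup d /\ incl r d).
Proof.
  induction y as [|c y IH] using rev_ind.
  - right. exists [], []. split; [reflexivity|split; [constructor|intros z []]].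
  - destruct IH as [(l1 & a & b & post & -> & Ha & Hb)|(d & r & -> & Hd & Hr)].
    + left. exists l1, a, b, (post ++ [c]). rewrite <- app_assoc. auto.
    + destruct (in_dec eq_dec c d) as [Hc|Hc].
      * right. exists d, (r ++ [c]). rewrite app_assoc. split; [reflexivity|split; [exact Hd|]].
        intros z Hz. apply in_app_iff in Hz. destruct Hz as [Hz|[<-|[]]]; auto.
      * assert (Hcr : ~ In c (d ++ r)).
        { intro H. apply in_app_iff in H. destruct H as [H|H]; auto. }
        destruct r as [|e r0 _] using rev_ind.
        -- right. exists (d ++ [c]), []. rewrite !app_nil_r.
           split; [reflexivity|split; [|intros z []]].
           apply NoDup_app; [exact Hd|repeat constructor; auto|].
           intros z Hz [<-|[]]. contradiction.
        -- left. exists (d ++ r0), e, c, []. rewrite <- !app_assoc. repeat split.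
           ++ apply in_or_app. left. apply Hr, in_or_app. right. left. reflexivity.
           ++ exact Hcr.
Qed.

Lemma distinct_prefix_ndistinct (d r : list X) : NoDup d -> incl r d ->
  ndistinct eq_dec (firstn (ndistinct eq_dec (d ++ r)) (d ++ r)) = ndistinct eq_dec (d ++ r).
Proof.
  intros Hd Hr.
  assert (E : ndistinct eq_dec (d ++ r) = length d).
  { rewrite <- (ndistinct_NoDup d Hd). apply ndistinct_same_support. intro z.
    rewrite in_app_iff. split; [intros [H|H]; auto|auto]. }
  rewrite E, firstn_app, Nat.sub_diag, firstn_all, app_nil_r. exact (ndistinct_NoDup d Hd).
Qed.

Section Model.
Variables (u : X -> R) (v : nat -> R) (beta0 : R).
Hypotheses (u_pos : forall i, 0 < u i) (v_pos : forall k, 0 < v k) (beta0_pos : 0 < beta0).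

Lemma beta_star_nonempty (p : list X) : p <> [] ->
  beta_star eq_dec beta0 p = beta_fun (INR (length p) + 1) (INR (ndistinct eq_dec p)).
Proof.
  intro Hp. unfold beta_star, beta_fun. destruct p as [|c r]; [contradiction|].
  rewrite plus_INR, INR_1. reflexivity.
Qed.

Lemma beta_star_pos (p : list X) : 0 < beta_star eq_dec beta0 p.
Proof.
  destruct p as [|c r] eqn:Ep; [exact beta0_pos|].
  rewrite <- Ep, beta_star_nonempty by (subst; discriminate).
  pose proof (le_INR _ _ (ndistinct_le_length p)) as Hle.
  pose proof (le_INR _ _ (ndistinct_pos p ltac:(subst; discriminate))) as Hpos.
  simpl in Hpos. apply beta_fun_pos; lra.
Qed.

Lemma cond_prob_seen (p : list X) (i : X) : In i p ->
  cond_prob eq_dec u v beta0 p i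
  = INR (cnt eq_dec p i) / (INR (length p) + beta_star eq_dec beta0 p).
Proof.
  intro Hi. unfold cond_prob.
  assert (Hc : (0 < cnt eq_dec p i)%nat) by (apply count_occ_In; exact Hi).
  apply Nat.ltb_lt in Hc. rewrite Hc. reflexivity.
Qed.

Lemma cond_prob_unseen (p : list X) (i : X) : ~ In i p ->
  cond_prob eq_dec u v beta0 p i
  = beta_star eq_dec beta0 p * (u i * v (ndistinct eq_dec p))
    / (INR (length p) + beta_star eq_dec beta0 p).
Proof.
  intro Hi. unfold cond_prob.
  assert (Hc : cnt eq_dec p i = 0%nat) by (apply count_occ_not_In; exact Hi).
  rewrite Hc. reflexivity.
Qed.

Lemma cond_prob_pos (p : list X) (i : X) : 0 < cond_prob eq_dec u v beta0 p i.
Proof.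
  pose proof (beta_star_pos p). pose proof (pos_INR (length p)).
  destruct (in_dec eq_dec i p) as [Hi|Hi].
  - rewrite cond_prob_seen by exact Hi.
    apply (count_occ_In eq_dec), lt_INR in Hi. simpl in Hi.
    apply Rdiv_lt_0_compat; [exact Hi|lra].
  - rewrite cond_prob_unseen by exact Hi.
    pose proof (u_pos i). pose proof (v_pos (ndistinct eq_dec p)).
    apply Rdiv_lt_0_compat; [repeat apply Rmult_lt_0_compat|]; lra.
Qed.

Lemma cond_prob_perm (p p' : list X) (i : X) : Permutation p p' ->
  cond_prob eq_dec u v beta0 p i = cond_prob eq_dec u v beta0 p' i.
Proof.
  intro H. unfold cond_prob, beta_star, cnt.
  rewrite (proj1 (Permutation_count_occ eq_dec p p') H i), (Permutation_length H),
    (ndistinct_perm _ _ H).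
  reflexivity.
Qed.

Fixpoint prob_after (p l : list X) : R :=
  match l with
  | [] => 1
  | c :: r => cond_prob eq_dec u v beta0 p c * prob_after (p ++ [c]) r
  end.

Lemma prob_after_pos (l p : list X) : 0 < prob_after p l.
Proof.
  revert p. induction l as [|c r IH]; intro p; simpl; [lra|].
  apply Rmult_lt_0_compat; [apply cond_prob_pos|apply IH].
Qed.

Lemma prob_after_perm (l p p' : list X) : Permutation p p' ->
  prob_after p l = prob_after p' l.
Proof.
  revert p p'. induction l as [|c r IH]; intros p p' H; simpl; [reflexivity|].
  rewrite (cond_prob_perm _ _ c H). f_equal. apply IH, Permutation_app_tail, H.
Qed.

Lemma prob_after_app (l1 l2 p : list X) :
  prob_after p (l1 ++ l2) = prob_after p l1 * prob_after (p ++ l1) l2.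
Proof.
  revert p. induction l1 as [|c r IH]; intro p; simpl.
  - rewrite app_nil_r. ring.
  - rewrite IH, <- app_assoc. simpl. ring.
Qed.

(* [seq_prob] computes the chain-rule product [prob_after] (generalised prefix). *)
Lemma seq_prob_after (l p : list X) :
  fold_right Rmult 1
    (map (fun t => match nth_error (p ++ l) t with
                   | Some i => cond_prob eq_dec u v beta0 (firstn t (p ++ l)) i
                   | None => 1
                   end) (seq (length p) (length l)))
  = prob_after p l.
Proof.
  revert p. induction l as [|c r IH]; intro p; simpl; [reflexivity|].
  rewrite nth_error_app2 by lia. rewrite Nat.sub_diag. simpl.
  rewrite firstn_app, Nat.sub_diag, firstn_all. simpl. rewrite app_nil_r.
  f_equal. specialize (IH (p ++ [c])).
  rewrite <- app_assoc, length_app, Nat.add_1_r in IH. exact IH.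
Qed.

Lemma seq_prob_chain (x : list X) : seq_prob eq_dec u v beta0 x = prob_after [] x.
Proof. exact (seq_prob_after x []). Qed.

Lemma swap_pair_prob (l1 : list X) (a b : X) : In a l1 -> ~ In b (l1 ++ [a]) ->
  cond_prob eq_dec u v beta0 l1 b * cond_prob eq_dec u v beta0 (l1 ++ [b]) a
  < cond_prob eq_dec u v beta0 l1 a * cond_prob eq_dec u v beta0 (l1 ++ [a]) b.
Proof.
  intros Ha Hb.
  assert (Hba : b <> a) by (intro; subst; apply Hb, in_or_app; right; left; reflexivity).
  assert (Hbl : ~ In b l1) by (intro; apply Hb, in_or_app; left; assumption).
  assert (Hl1 : l1 <> []) by (intro; subst; contradiction).
  assert (Hcnt : cnt eq_dec (l1 ++ [b]) a = cnt eq_dec l1 a).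
  { unfold cnt. rewrite count_occ_app. simpl. destruct (eq_dec b a); [contradiction|lia]. }
  rewrite (cond_prob_unseen l1 b), (cond_prob_seen (l1 ++ [b]) a), (cond_prob_seen l1 a),
    (cond_prob_unseen (l1 ++ [a]) b) by (try apply in_or_app; auto).
  rewrite (beta_star_nonempty l1), (beta_star_nonempty (l1 ++ [a])),
    (beta_star_nonempty (l1 ++ [b]))
    by (exact Hl1 || (intro Hnil; apply app_eq_nil in Hnil; destruct Hnil; discriminate)).
  rewrite Hcnt, (ndistinct_snoc_old _ _ Ha), (ndistinct_snoc_new _ _ Hbl), !length_app.
  simpl length. rewrite !Nat.add_1_r, !S_INR.
  pose proof (lt_INR _ _ (proj1 (count_occ_In eq_dec l1 a) Ha)) as Hna.
  pose proof (le_INR _ _ (ndistinct_le_length l1)) as Hle.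
  pose proof (le_INR _ _ (ndistinct_pos l1 Hl1)) as Hpos.
  simpl in Hna, Hpos.
  apply swap_factor_ineq; try lra.
  - exact Hna.
  - apply Rmult_lt_0_compat; auto.
Qed.

(* Swapping an (old, new) adjacent pair into (new, old) strictly increases the
   redundancy; the maximum-likelihood term is unchanged by any permutation. *)
Lemma redundancy_swap_old_new (l1 : list X) (a b : X) (post : list X) :
  In a l1 -> ~ In b (l1 ++ [a]) ->
  redundancy eq_dec u v beta0 (l1 ++ b :: a :: post)
  > redundancy eq_dec u v beta0 (l1 ++ a :: b :: post).
Proof.
  intros Ha Hb.
  assert (Hswap : Permutation (l1 ++ a :: b :: post) (l1 ++ b :: a :: post))
    by (apply Permutation_app_head; constructor).
  unfold redundancy. rewrite (ml_prob_perm _ _ Hswap), !seq_prob_chain, !prob_after_app.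
  simpl prob_after.
  rewrite (prob_after_perm post ((l1 ++ [b]) ++ [a]) ((l1 ++ [a]) ++ [b]))
    by (rewrite <- !app_assoc; apply Permutation_app_head; constructor).
  pose proof (swap_pair_prob l1 a b Ha Hb) as Hpair.
  pose proof (prob_after_pos l1 []) as P1.
  pose proof (prob_after_pos post ((l1 ++ [a]) ++ [b])) as P2.
  pose proof (cond_prob_pos l1 b). pose proof (cond_prob_pos (l1 ++ [b]) a).
  set (c := cond_prob eq_dec u v beta0) in *.
  set (rest := prob_after ((l1 ++ [a]) ++ [b]) post) in *.
  assert (Hln : ln (prob_after [] l1 * (c l1 b * (c (l1 ++ [b]) a * rest)))
                < ln (prob_after [] l1 * (c l1 a * (c (l1 ++ [a]) b * rest)))).
  { apply ln_increasing; [repeat apply Rmult_lt_0_compat; assumption|].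
    rewrite <- !Rmult_assoc. apply Rmult_lt_compat_r; [assumption|].
    rewrite !Rmult_assoc. apply Rmult_lt_compat_l; assumption. }
  unfold Rgt. lra.
Qed.

Lemma redundancy_swap_positional (x : list X) (t : nat) (a b : X) :
  (2 <= t)%nat -> (t <= length x - 1)%nat ->
  nth_error x (t - 1) = Some a -> nth_error x t = Some b ->
  In a (firstn (t - 1) x) -> ~ In b (firstn t x) ->
  redundancy eq_dec u v beta0 (swap_at (t - 1) x) > redundancy eq_dec u v beta0 x.
Proof.
  intros Ht Htn Hxa Hxb Ha Hb.
  destruct (nth_error_split x (t - 1) Hxa) as (l1 & l2 & -> & Hl1).
  rewrite nth_error_app2 in Hxb by lia.
  replace (t - length l1)%nat with 1%nat in Hxb by lia.
  destruct l2 as [|b' post]; simpl in Hxb; [discriminate|]. injection Hxb as ->.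
  rewrite firstn_app, <- Hl1, firstn_all, Nat.sub_diag, app_nil_r in Ha.
  rewrite firstn_app, firstn_all2 in Hb by lia.
  replace (t - length l1)%nat with 1%nat in Hb by lia.
  rewrite <- Hl1, swap_at_app. apply redundancy_swap_old_new; assumption.
Qed.

(* Part 2: a redundancy maximiser exists among the finitely many rearrangements,
   and by [redundancy_swap_old_new] it cannot contain an (old, new) adjacent
   pair, so all its distinct symbols come first. *)
Lemma redundancy_maximizer_distinct_first (x : list X) :
  exists y, Permutation x y /\
    ndistinct eq_dec (firstn (ndistinct eq_dec x) y) = ndistinct eq_dec x /\
    forall z, Permutation x z ->
      redundancy eq_dec u v beta0 z <= redundancy eq_dec u v beta0 y.
Proof.
  destruct (exists_argmax (redundancy eq_dec u v beta0) (permutations x)) as (y & Hy & Hmax).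
  { intro Hnil. pose proof (permutations_complete x x (Permutation_refl x)) as Hx.
    rewrite Hnil in Hx. contradiction. }
  pose proof (permutations_sound x y Hy) as Hxy.
  exists y. split; [exact Hxy|split].
  - rewrite (ndistinct_perm _ _ Hxy).
    destruct (old_new_pair_or_distinct_prefix y)
      as [(l1 & a & b & post & Ey & Ha & Hb)|(d & r & -> & Hd & Hr)].
    + exfalso.
      assert (Hperm : Permutation x (l1 ++ b :: a :: post))
        by (rewrite Hxy, Ey; apply Permutation_app_head; constructor).
      pose proof (Hmax _ (permutations_complete _ _ Hperm)) as Hle.
      pose proof (redundancy_swap_old_new l1 a b post Ha Hb) as Hgt.
      rewrite <- Ey in Hgt. lra.
    + apply distinct_prefix_ndistinct; assumption.
  - intros z Hz. apply Hmax, permutations_complete, Hz.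
Qed.

End Model.
End Sequences.

Theorem mainTheorem6
  (X : Type) (eq_dec : forall a b : X, {a = b} + {a <> b})
  (enum : list X) (enum_nodup : NoDup enum) (enum_full : forall a : X, In a enum)
  (u : X -> R) (v : nat -> R) (beta0 : R)
  (u_pos : forall i, 0 < u i) (v_pos : forall k, 0 < v k) (beta0_pos : 0 < beta0)
  (w_le1 : forall p : list X, new_weight_sum eq_dec enum u v p <= 1) :
  (forall (x : list X) (t : nat) (a b : X),
      (2 <= t)%nat -> (t <= length x - 1)%nat ->
      nth_error x (t - 1) = Some a ->            (* a = x_t *)
      nth_error x t = Some b ->                  (* b = x_{t+1} *)
      In a (firstn (t - 1) x) ->                 (* x_t in A_{t-1} *)
      ~ In b (firstn t x) ->                     (* x_{t+1} not in A_t *)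
      redundancy eq_dec u v beta0 (swap_at (t - 1) x)
        > redundancy eq_dec u v beta0 x)
  /\
  (forall x : list X,
      exists y : list X,
        Permutation x y /\
        ndistinct eq_dec (firstn (ndistinct eq_dec x) y) = ndistinct eq_dec x /\
        forall z : list X, Permutation x z ->
          redundancy eq_dec u v beta0 z <= redundancy eq_dec u v beta0 y).
Proof.
  split.
  - intros x t a b.
    exact (redundancy_swap_positional eq_dec u v beta0 u_pos v_pos beta0_pos x t a b).
  - exact (redundancy_maximizer_distinct_first eq_dec u v beta0 u_pos v_pos beta0_pos).
Qed.
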